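(* Every LSGA net is a structural conflict net.
   Context: A Petri net $N=(S,T,F,M_0,\ell)$ has disjoint $S,T$, $F:(S\times T)\cup(T\times S)\to\mathbb N$, $M_0\in\mathbb N^S$, labelling $\ell$. ${}^\bullet x(y)=F(y,x)$, $x^\bullet(y)=F(x,y)$. For a finite nonempty multiset $G$ of transitions, $M[G\rangle M'$ iff ${}^\bullet G\le M$ and $M'=M-{}^\bullet G+G^\bullet$; $t\smile u$ iff $M[\{t\}+\{u\}\rangle$ for some reachable $M$. $N$ is a structural conflict net iff $t\smile u$ implies ${}^\bullet t\cap{}^\bullet u=\emptyset$. A component with interface is $(N,I,O)$ with $I,O\subseteq S$, $I\cap O=\emptyset$ and $o^\bullet=\emptyset$ for $o\in O$; it is sequential iff there is $Q\subseteq S\setminus(I\cup O)$ with $|{}^\bullet t\restriction Q|=|t^\bullet\restriction Q|=1$ for all $t\in T$ and $|M_0\restriction Q|=1$. For components $((S_k,T_k,F_k,M_{0k},\ell_k),I_k,O_k)$, $k\in K$, with $(S_k\cup T_k)\cap(S_l\cup T_l)=(I_k\cup O_k)\cap(I_l\cup O_l)$ and $I_k\cap I_l=\emptyset$ for $k\ne l$, the asynchronous parallel composition is $((\bigcup S_k,\bigcup T_k,\bigcup F_k,\sum M_{0k},\bigcup\ell_k),\bigcup I_k,\bigcup O_k\setminus\bigcup I_k)$. $N$ is an LSGA net iff $(N,I,O)$ equals the asynchronous parallel composition of some family of sequential components, for some $I,O$. *)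

From Stdlib Require Import List.
Import ListNotations.
Set Implicit Arguments.

Section Nets.
Variables (U Act : Type).

(* Places/transitions are predicates on U;
   F is the arc-weight function, extended by 0 outside (S x T) u (T x S);
   M0 is the initial marking (0 outside S); lab is the labelling
   (only its values on T are meaningful). *)
Record net := Net {
  places : U -> Prop;
  trans  : U -> Prop;
  flow   : U -> U -> nat;
  init   : U -> nat;
  lab    : U -> Act }.

Definition is_net (N : net) : Prop :=
  (forall x, ~ (places N x /\ trans N x)) /\
  (forall x y, flow N x y <> 0 ->
     (places N x /\ trans N y) \/ (trans N x /\ places N y)) /\
  (forall s, init N s <> 0 -> places N s).

Definition marking := U -> nat.

(* A finite multiset of transitions, represented by a list. *)
Definition preset (N : net) (G : list U) : marking :=
  fun s => fold_right (fun t acc => flow N s t + acc) 0 G.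
Definition postset (N : net) (G : list U) : marking :=
  fun s => fold_right (fun t acc => flow N t s + acc) 0 G.

Definition fires (N : net) (M : marking) (G : list U) (M' : marking) : Prop :=
  G <> [] /\ (forall t, In t G -> trans N t) /\
  (forall s, preset N G s <= M s) /\
  (forall s, M' s = M s - preset N G s + postset N G s).

Inductive reachable (N : net) : marking -> Prop :=
| reach_init : reachable N (init N)
| reach_step : forall M G M', reachable N M -> fires N M G M' -> reachable N M'.

Definition concurrent (N : net) (t u : U) : Prop :=
  exists M M', reachable N M /\ fires N M [t; u] M'.

Definition structural_conflict_net (N : net) : Prop :=
  forall t u, concurrent N t u ->
    forall s, ~ (flow N s t <> 0 /\ flow N s u <> 0).

Record component := Comp { cnet : net; cI : U -> Prop; cO : U -> Prop }.

Definition is_component (C : component) : Prop :=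
  is_net (cnet C) /\
  (forall x, cI C x -> places (cnet C) x) /\
  (forall x, cO C x -> places (cnet C) x) /\
  (forall x, ~ (cI C x /\ cO C x)) /\
  (forall o, cO C o -> forall y, flow (cnet C) o y = 0).

Definition size_one_on (Q : U -> Prop) (f : U -> nat) : Prop :=
  exists s, Q s /\ f s = 1 /\ forall s', Q s' -> s' <> s -> f s' = 0.

Definition sequential (C : component) : Prop :=
  exists Q : U -> Prop,
    (forall q, Q q -> places (cnet C) q /\ ~ cI C q /\ ~ cO C q) /\
    (forall t, trans (cnet C) t -> size_one_on Q (fun s => flow (cnet C) s t)) /\
    (forall t, trans (cnet C) t -> size_one_on Q (fun s => flow (cnet C) t s)) /\
    size_one_on Q (init (cnet C)).

Definition composable (K : Type) (C : K -> component) : Prop :=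
  forall k l, k <> l ->
    (forall x,
       ((places (cnet (C k)) x \/ trans (cnet (C k)) x) /\
        (places (cnet (C l)) x \/ trans (cnet (C l)) x)) <->
       ((cI (C k) x \/ cO (C k) x) /\ (cI (C l) x \/ cO (C l) x))) /\
    (forall x, ~ (cI (C k) x /\ cI (C l) x)).

Definition in_dom (N : net) (x y : U) : Prop :=
  (places N x /\ trans N y) \/ (trans N x /\ places N y).


Definition is_async_comp (K : Type) (C : K -> component) (N : net)
    (I O : U -> Prop) : Prop :=
  (forall x, places N x <-> exists k, places (cnet (C k)) x) /\
  (forall x, trans N x <-> exists k, trans (cnet (C k)) x) /\
  (forall k x y, in_dom (cnet (C k)) x y -> flow N x y = flow (cnet (C k)) x y) /\
  (forall x y, (forall k, ~ in_dom (cnet (C k)) x y) -> flow N x y = 0) /\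
  (forall s, exists ks : list K, NoDup ks /\
       (forall k, init (cnet (C k)) s <> 0 -> In k ks) /\
       init N s = fold_right (fun k acc => init (cnet (C k)) s + acc) 0 ks) /\
  (forall k t, trans (cnet (C k)) t -> lab N t = lab (cnet (C k)) t) /\
  (forall x, I x <-> exists k, cI (C k) x) /\
  (forall x, O x <-> ((exists k, cO (C k) x) /\ ~ exists k, cI (C k) x)).

Definition LSGA_net (N : net) : Prop :=
  exists (I O : U -> Prop) (K : Type) (C : K -> component),
    (forall k, is_component (C k)) /\
    (forall k, sequential (C k)) /\
    composable C /\
    is_async_comp C N I O.

End Nets.

(** Proof idea: the state places [Q] of a sequential component carry exactly
    one token in every reachable marking, and every transition of that
    component consumes one token from [Q]; hence two transitions of the same
    component are never concurrent.  Two transitions of different components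
    can only share a preplace through the interface, but such a place is an
    output of one of them (which has no outgoing arcs) or an input of both
    (excluded by composability). *)
From Stdlib Require Import List Lia Classical.
Import ListNotations.

Set Implicit Arguments.

Section SumList.
Variables (K : Type) (f : K -> nat) (k : K).
Hypothesis f_zero_elsewhere : forall k', k' <> k -> f k' = 0.

Lemma sum_list_notin (ks : list K) :
  ~ In k ks -> fold_right (fun k acc => f k + acc) 0 ks = 0.
Proof.
  induction ks as [|k1 ks IH]; simpl; intros Hn; [reflexivity|].
  rewrite f_zero_elsewhere, IH; auto.
Qed.

Lemma sum_list_single (ks : list K) :
  NoDup ks -> (f k <> 0 -> In k ks) ->
  fold_right (fun k acc => f k + acc) 0 ks = f k.
Proof.
  induction ks as [|k1 ks IH]; simpl; intros Hnd Hin.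
  - destruct (f k); [reflexivity|]. destruct Hin; discriminate.
  - inversion Hnd as [|? ? Hk1 Hnd']; subst.
    destruct (classic (k1 = k)) as [->|Hne].
    + rewrite sum_list_notin; auto.
    + rewrite f_zero_elsewhere by auto.
      apply IH; auto. intros Hf. destruct (Hin Hf); congruence.
Qed.

End SumList.

Section SizeOne.
Variables (U : Type) (Q : U -> Prop).

Lemma size_one_on_ext (f g : U -> nat) :
  (forall q, Q q -> f q = g q) -> size_one_on Q f -> size_one_on Q g.
Proof.
  intros Efg [a [Ha [Fa F0]]]. exists a.
  split; [exact Ha|]. split; [rewrite <- Efg; auto|].
  intros q Hq Hne. rewrite <- Efg; auto.
Qed.

Lemma size_one_on_le_eq (f g : U -> nat) :
  size_one_on Q f -> size_one_on Q g -> (forall q, Q q -> f q <= g q) ->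
  forall q, Q q -> f q = g q.
Proof.
  intros [a [Ha [Fa F0]]] [b [Hb [Gb G0]]] Hle q Hq.
  assert (a = b) as <-.
  { apply NNPP; intros Hne. specialize (Hle a Ha). rewrite G0 in Hle; auto. lia. }
  destruct (classic (q = a)) as [->|Hne]; [congruence|].
  rewrite F0, G0; auto.
Qed.

End SizeOne.

Section StateMachine.
Variables (U Act : Type) (N : net U Act) (Q P : U -> Prop).

Lemma preset_cons (t : U) (G : list U) (s : U) :
  preset N (t :: G) s = flow N s t + preset N G s.
Proof. reflexivity. Qed.

Lemma postset_cons (t : U) (G : list U) (s : U) :
  postset N (t :: G) s = flow N t s + postset N G s.
Proof. reflexivity. Qed.

Hypothesis pre_P : forall t, P t -> size_one_on Q (fun s => flow N s t).
Hypothesis post_P : forall t, P t -> size_one_on Q (fun s => flow N t s).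
Hypothesis flow_not_P :
  forall t, ~ P t -> forall q, Q q -> flow N q t = 0 /\ flow N t q = 0.

Lemma two_consumers_exceed (M : marking U) (t1 t2 : U) :
  size_one_on Q M -> P t1 -> P t2 ->
  exists q, Q q /\ M q < flow N q t1 + flow N q t2.
Proof.
  intros [q0 [Hq0 [M1 M0]]] P1 P2.
  destruct (pre_P P1) as [a [Ha [Fa _]]].
  destruct (pre_P P2) as [b [Hb [Fb _]]].
  destruct (classic (a = q0)) as [->|Ha0]; [destruct (classic (b = q0)) as [->|Hb0]|].
  - exists q0. split; [exact Hq0|lia].
  - exists b. rewrite M0 by auto. split; [exact Hb|lia].
  - exists a. rewrite M0 by auto. split; [exact Ha|lia].
Qed.

(* With a single token on [Q], an enabled multiset contains at most one
   transition of [P]. *)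
Lemma enabled_multiset_on_Q (M : marking U) (G : list U) :
  size_one_on Q M -> (forall q, Q q -> preset N G q <= M q) ->
  (forall q, Q q -> preset N G q = 0 /\ postset N G q = 0) \/
  (exists t, P t /\
     forall q, Q q -> preset N G q = flow N q t /\ postset N G q = flow N t q).
Proof.
  intros HM. induction G as [|t1 G IH]; intros Hle.
  { left. split; reflexivity. }
  assert (Hle' : forall q, Q q -> preset N G q <= M q).
  { intros q Hq. specialize (Hle q Hq). rewrite preset_cons in Hle. lia. }
  destruct (classic (P t1)) as [P1|P1]; destruct (IH Hle') as [A|[t [Pt B]]].
  - right. exists t1. split; [exact P1|]. intros q Hq.
    rewrite preset_cons, postset_cons. destruct (A q Hq). lia.
  - exfalso. destruct (two_consumers_exceed HM P1 Pt) as [q [Hq Hlt]].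
    specialize (Hle q Hq). rewrite preset_cons in Hle. destruct (B q Hq). lia.
  - left. intros q Hq. rewrite preset_cons, postset_cons.
    destruct (A q Hq), (flow_not_P P1 Hq). lia.
  - right. exists t. split; [exact Pt|]. intros q Hq.
    rewrite preset_cons, postset_cons. destruct (B q Hq), (flow_not_P P1 Hq). lia.
Qed.

Lemma fires_size_one_on (M M' : marking U) (G : list U) :
  size_one_on Q M -> fires N M G M' -> size_one_on Q M'.
Proof.
  intros HM [_ [_ [Hle HM']]].
  destruct (enabled_multiset_on_Q G HM (fun q _ => Hle q)) as [A|[t [Pt B]]].
  - apply (size_one_on_ext (f := M)); [|exact HM].
    intros q Hq. rewrite HM'. destruct (A q Hq). lia.
  - assert (EM : forall q, Q q -> flow N q t = M q).
    { apply size_one_on_le_eq; auto.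
      intros q Hq. rewrite <- (proj1 (B q Hq)). apply Hle. }
    apply (size_one_on_ext (f := fun s => flow N t s)); [|exact (post_P Pt)].
    intros q Hq. rewrite HM'. destruct (B q Hq) as [-> ->]. rewrite EM; auto. lia.
Qed.

Lemma reachable_size_one_on (M : marking U) :
  size_one_on Q (init N) -> reachable N M -> size_one_on Q M.
Proof.
  intros Hinit HR. induction HR as [|M G M' _ IH Hf]; [exact Hinit|].
  exact (fires_size_one_on IH Hf).
Qed.

Lemma not_concurrent_state_machine (t u : U) :
  size_one_on Q (init N) -> P t -> P u -> ~ concurrent N t u.
Proof.
  intros Hinit Pt Pu [M [M' [HR [_ [_ [Hle _]]]]]].
  destruct (two_consumers_exceed (reachable_size_one_on Hinit HR) Pt Pu)
    as [q [_ Hlt]].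
  specialize (Hle q). unfold preset in Hle. simpl in Hle. lia.
Qed.

End StateMachine.

Lemma concurrent_trans (U Act : Type) (N : net U Act) (t u : U) :
  concurrent N t u -> trans N t /\ trans N u.
Proof.
  intros [M [M' [_ [_ [HG _]]]]]. split; apply HG; simpl; auto.
Qed.

Section LSGA.
Variables (U Act K : Type) (N : net U Act) (I O : U -> Prop)
  (C : K -> component U Act).
Hypothesis net_N : is_net N.
Hypothesis components : forall k, is_component (C k).
Hypothesis composable_C : composable C.
Hypothesis async : is_async_comp C N I O.

Lemma places_async (x : U) : places N x <-> exists k, places (cnet (C k)) x.
Proof. destruct async as [H _]. apply H. Qed.

Lemma trans_async (x : U) : trans N x <-> exists k, trans (cnet (C k)) x.
Proof. destruct async as (_ & H & _). apply H. Qed.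

Lemma flow_async (k : K) (x y : U) :
  in_dom (cnet (C k)) x y -> flow N x y = flow (cnet (C k)) x y.
Proof. destruct async as (_ & _ & H & _). apply H. Qed.

Lemma flow_async_zero (x y : U) :
  (forall k, ~ in_dom (cnet (C k)) x y) -> flow N x y = 0.
Proof. destruct async as (_ & _ & _ & H & _). apply H. Qed.

Definition internal (k : K) (q : U) : Prop :=
  places (cnet (C k)) q /\ ~ cI (C k) q /\ ~ cO (C k) q.

Lemma shared_node_interface {k l : K} {x : U} : k <> l ->
  places (cnet (C k)) x \/ trans (cnet (C k)) x ->
  places (cnet (C l)) x \/ trans (cnet (C l)) x ->
  (cI (C k) x \/ cO (C k) x) /\ (cI (C l) x \/ cO (C l) x).
Proof. intros Hkl Hk Hl. apply (proj1 (composable_C Hkl) x). auto. Qed.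

Lemma interface_not_trans {k : K} {x : U} :
  cI (C k) x \/ cO (C k) x -> ~ trans (cnet (C k)) x.
Proof.
  destruct (components k) as [[Hdisj _] [HI [HO _]]].
  intros Hx Hx'. apply (Hdisj x). destruct Hx; auto.
Qed.

Lemma trans_owner_unique {k l : K} {t : U} :
  trans (cnet (C k)) t -> trans (cnet (C l)) t -> k = l.
Proof.
  intros Hk Hl. apply NNPP; intros Hkl.
  destruct (shared_node_interface Hkl (or_intror Hk) (or_intror Hl)) as [Hi _].
  exact (interface_not_trans Hi Hk).
Qed.

Lemma internal_place_owner {k l : K} {q : U} :
  internal k q -> places (cnet (C l)) q -> l = k.
Proof.
  intros [Hp [HnI HnO]] Hl. apply NNPP; intros Hlk.
  destruct (shared_node_interface (fun e => Hlk (eq_sym e)) (or_introl Hp) (or_introl Hl))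
    as [[Hi|Ho] _]; contradiction.
Qed.

Lemma internal_not_trans {k l : K} {q : U} :
  internal k q -> ~ trans (cnet (C l)) q.
Proof.
  intros [Hp _] Ht. apply (proj1 net_N q). split.
  - apply places_async. eauto.
  - apply trans_async. eauto.
Qed.

Lemma flow_internal_own {k : K} {q t : U} :
  internal k q -> trans (cnet (C k)) t ->
  flow N q t = flow (cnet (C k)) q t /\ flow N t q = flow (cnet (C k)) t q.
Proof.
  intros Hq Ht. destruct Hq as [Hp _].
  split; apply flow_async; [left|right]; auto.
Qed.

Lemma flow_internal_foreign {k : K} {q t : U} :
  internal k q -> ~ trans (cnet (C k)) t -> flow N q t = 0 /\ flow N t q = 0.
Proof.
  intros Hq Ht.
  assert (Hown : forall k', places (cnet (C k')) q -> ~ trans (cnet (C k')) t).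
  { intros k' Hp'. rewrite (internal_place_owner Hq Hp'). exact Ht. }
  split; apply flow_async_zero; intros k' [[H1 H2]|[H1 H2]];
    solve [exact (Hown k' H1 H2) | exact (Hown k' H2 H1)
          | exact (internal_not_trans Hq H1) | exact (internal_not_trans Hq H2)].
Qed.

Lemma init_internal {k : K} {q : U} :
  internal k q -> init N q = init (cnet (C k)) q.
Proof.
  intros Hq. destruct async as (_ & _ & _ & _ & Hinit & _).
  destruct (Hinit q) as [ks [Hnd [Hks ->]]].
  apply (sum_list_single (fun k => init (cnet (C k)) q)); auto.
  intros k' Hk'. apply NNPP; intros Hnz. apply Hk'.
  apply (internal_place_owner Hq).
  destruct (components k') as [[_ [_ Hi]] _]. auto.
Qed.

Lemma same_component_not_concurrent {k : K} {t u : U} :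
  sequential (C k) -> trans (cnet (C k)) t -> trans (cnet (C k)) u ->
  ~ concurrent N t u.
Proof.
  intros [Q [HQ [Hpre [Hpost Hinit]]]].
  apply (not_concurrent_state_machine (Q := Q)).
  - intros t' Ht'. apply (size_one_on_ext (f := fun s => flow (cnet (C k)) s t'));
      [|auto]. intros q Hq. symmetry. apply (flow_internal_own (HQ q Hq) Ht').
  - intros t' Ht'. apply (size_one_on_ext (f := fun s => flow (cnet (C k)) t' s));
      [|auto]. intros q Hq. symmetry. apply (flow_internal_own (HQ q Hq) Ht').
  - intros t' Ht' q Hq. exact (flow_internal_foreign (HQ q Hq) Ht').
  - apply (size_one_on_ext (f := init (cnet (C k)))); [|exact Hinit].
    intros q Hq. symmetry. exact (init_internal (HQ q Hq)).
Qed.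

Lemma preplace_in_owner {k : K} {s t : U} :
  trans (cnet (C k)) t -> flow N s t <> 0 ->
  places (cnet (C k)) s /\ flow (cnet (C k)) s t <> 0.
Proof.
  intros Ht Hst.
  assert (exists k', in_dom (cnet (C k')) s t) as [k' [[Hs Ht']|[Hts _]]].
  { apply NNPP; intros Hn. apply Hst, flow_async_zero. eauto. }
  - rewrite (trans_owner_unique Ht' Ht) in Hs. split; [exact Hs|].
    erewrite <- flow_async; [exact Hst|left; split; eauto].
  - exfalso.
    assert (trans N s) by (apply trans_async; eauto).
    assert (trans N t) by (apply trans_async; eauto).
    destruct (proj1 (proj2 net_N) s t Hst) as [[Hp _]|[_ Hp]];
      [apply (proj1 net_N s) | apply (proj1 net_N t)]; auto.
Qed.

Lemma distinct_components_disjoint_presets {k l : K} {s t u : U} :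
  k <> l -> trans (cnet (C k)) t -> trans (cnet (C l)) u ->
  flow N s t <> 0 -> flow N s u <> 0 -> False.
Proof.
  intros Hkl Ht Hu Hst Hsu.
  destruct (preplace_in_owner Ht Hst) as [Hsk Hfk].
  destruct (preplace_in_owner Hu Hsu) as [Hsl Hfl].
  destruct (components k) as (_ & _ & _ & _ & Hout_k).
  destruct (components l) as (_ & _ & _ & _ & Hout_l).
  destruct (shared_node_interface Hkl (or_introl Hsk) (or_introl Hsl))
    as [[Ik|Ok] [Il|Ol]].
  - exact (proj2 (composable_C Hkl) s (conj Ik Il)).
  - exact (Hfl (Hout_l s Ol u)).
  - exact (Hfk (Hout_k s Ok t)).
  - exact (Hfk (Hout_k s Ok t)).
Qed.

End LSGA.

Theorem corollary4p14 (U Act : Type) (N : net U Act) :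
  is_net N -> LSGA_net N -> structural_conflict_net N.
Proof.
  intros HN (I & O & K & C & Hcomp & Hseq & Hcompos & Hasync) t u Htu s [Hst Hsu].
  destruct (concurrent_trans Htu) as [Ht Hu].
  destruct (proj1 (trans_async Hasync t) Ht) as [k Hk].
  destruct (proj1 (trans_async Hasync u) Hu) as [l Hl].
  destruct (classic (k = l)) as [<-|Hkl].
  - exact (same_component_not_concurrent HN Hcomp Hcompos Hasync (Hseq k) Hk Hl Htu).
  - exact (distinct_components_disjoint_presets HN Hcomp Hcompos Hasync Hkl Hk Hl Hst Hsu).
Qed.
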